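(* Let $(B,+,\circ)$ be a left brace with Yang–Baxter map $r$ and let $c\in B$ be central in $(B,\circ)$. Then the map (1) $k_{1,n}(x)=c\circ x-c+n\,x$, for each $n\in\mathbb Z$, is $\mathcal G(B,r)$-equivariant. If moreover $2\,(c\circ b)=2b+2c$ for all $b\in B$, then the following maps $B\to B$ are also $\mathcal G(B,r)$-equivariant: (2) $k_{2,n}(x)=c\circ x+c+n\,x$, for each $n\in\mathbb Z$; (3) $\widetilde k_m(x)=c^{2m}\circ x+c^{2m}+2\sum_{j=1}^{m-1}c^{2j}-2\sum_{j=1}^{m}c^{2j-1}$, for each integer $m\ge1$; (4) $\widehat k_m(x)=c^{2m}\circ x-c^{2m}-2\sum_{j=1}^{m-1}c^{2j}+2\sum_{j=1}^{m}c^{2j-1}$, for each integer $m\ge1$; (5) $l_{m,n}(x)=2m\,c+(2m+n)\,x$, for each integer $m\ge1$ and $n\in\mathbb Z$.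
   Context: A (left) brace is a triple $(B,+,\circ)$ such that $(B,+)$ is an abelian group with identity $0$, $(B,\circ)$ is a group, and $x\circ(y+z)=x\circ y+x\circ z-x$ for all $x,y,z\in B$. The Yang–Baxter map is $r(x,y)=(\sigma_x(y),\tau_y(x))$ with $\sigma_x(y)=x\circ y-x$ and $\tau_y(x)=(\sigma_x(y))^{-1}\circ x-(\sigma_x(y))^{-1}$. A map $k:B\to B$ is $\mathcal G(B,r)$-equivariant if $k\sigma_x=\sigma_x k$ for all $x\in B$. Powers $c^j$ are taken in the group $(B,\circ)$; $n\,x$ for $n\in\mathbb Z$ denotes the $n$-th multiple in $(B,+)$; empty sums are $0$. *)

From mathcomp Require Import all_boot all_order all_algebra.
Set Implicit Arguments. Unset Strict Implicit. Unset Printing Implicit Defensive.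
Import GRing.Theory.
Local Open Scope ring_scope.

Record brace (B : zmodType) := Brace {
  circ : B -> B -> B;
  cinv : B -> B;
  cone : B;
  circA : forall x y z, circ x (circ y z) = circ (circ x y) z;
  circ1l : forall x, circ cone x = x;
  circ1r : forall x, circ x cone = x;
  circVl : forall x, circ (cinv x) x = cone;
  circVr : forall x, circ x (cinv x) = cone;
  brace_compat : forall x y z, circ x (y + z) = circ x y + circ x z - x
}.

Definition sigma (B : zmodType) (Br : brace B) (x y : B) : B := circ Br x y - x.

(* k is G(B,r)-equivariant: k o sigma_x = sigma_x o k for all x *)
Definition equivariant (B : zmodType) (Br : brace B) (k : B -> B) : Prop :=
  forall x y, k (sigma Br x y) = sigma Br x (k y).

Definition cpow (B : zmodType) (Br : brace B) (c : B) (j : nat) : B :=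
  iter j (circ Br c) (cone Br).

(* Each sigma_x is an additive endomorphism of (B,+) and sigma_(x o y) is
   sigma_x composed with sigma_y, so for central d the map sigma_d, i.e.
   x |-> d o x - d, commutes with every sigma_x.  Equivariant maps are closed
   under sums and differences and contain x |-> n x and the constants fixed by
   every sigma_x; each of the five maps is such a combination, x |-> d o x + d
   being sigma_d plus the constant 2 d.  Under 2 (c o b) = 2 b + 2 c every
   power a of c is central with 2 (a o b) = 2 b + 2 a, which makes 2 a fixed
   by every sigma_x. *)
From Pilot Require Import Defs.
From HB Require Import structures.
From mathcomp Require Import all_boot all_order all_algebra.
Set Implicit Arguments.
Unset Strict Implicit.
Unset Printing Implicit Defensive.
Import GRing.Theory.
Local Open Scope ring_scope.

Section BraceEquivariance.
Variables (B : zmodType) (Br : brace B).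

Local Notation sigma := (sigma Br).
Local Notation cpow := (cpow Br).

Definition circ_central (a : B) := forall b, circ Br a b = circ Br b a.

Definition circ_double_add (a : B) :=
  forall b, (circ Br a b) *+ 2 = b *+ 2 + a *+ 2.

Definition sigma_fixed (a : B) := forall x, sigma x a = a.

Lemma circr0 x : circ Br x 0 = x.
Proof.
have := brace_compat Br x 0 0; rewrite addr0 => /eqP.
by rewrite eq_sym -subr_eq0 addrAC addrK subr_eq0 => /eqP.
Qed.

Lemma cone0 : cone Br = 0.
Proof. by rewrite -(circ1l Br 0) circr0. Qed.

Lemma sigma_is_nmod_morphism x : nmod_morphism (sigma x).
Proof.
split=> [|y z]; first by rewrite /Defs.sigma circr0 subrr.
by rewrite /Defs.sigma brace_compat addrACA addrA.
Qed.

HB.instance Definition _ x :=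
  GRing.isNmodMorphism.Build B B (sigma x) (sigma_is_nmod_morphism x).

Lemma sigmaM x y z : sigma (circ Br x y) z = sigma x (sigma y z).
Proof.
by rewrite [sigma y z]/Defs.sigma raddfB /= /Defs.sigma circA opprB addrA subrK.
Qed.

Lemma eq_equivariant (k1 k2 : B -> B) :
  k1 =1 k2 -> equivariant Br k1 -> equivariant Br k2.
Proof. by move=> eqk k1_eq x y; rewrite -!eqk k1_eq. Qed.

Lemma equivariantD (k1 k2 : B -> B) : equivariant Br k1 -> equivariant Br k2 ->
  equivariant Br (fun x => k1 x + k2 x).
Proof. by move=> k1_eq k2_eq x y; rewrite raddfD k1_eq k2_eq. Qed.

Lemma equivariantB (k1 k2 : B -> B) : equivariant Br k1 -> equivariant Br k2 ->
  equivariant Br (fun x => k1 x - k2 x).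
Proof. by move=> k1_eq k2_eq x y; rewrite raddfB k1_eq k2_eq. Qed.

Lemma equivariant_cst a : sigma_fixed a -> equivariant Br (fun=> a).
Proof. by move=> fixa x y; rewrite fixa. Qed.

Lemma equivariant_mulrz (n : int) : equivariant Br (fun x => x *~ n).
Proof. by move=> x y; rewrite raddfMz. Qed.

Lemma equivariant_sigma_central d : circ_central d -> equivariant Br (sigma d).
Proof. by move=> cd x y; rewrite -!sigmaM cd. Qed.

Lemma equivariant_circ_addr d : circ_central d -> sigma_fixed (d *+ 2) ->
  equivariant Br (fun x => circ Br d x + d).
Proof.
move=> cd fix2d; apply: eq_equivariant
  (equivariantD (equivariant_sigma_central cd) (equivariant_cst fix2d)) => x.
by rewrite /Defs.sigma mulr2n subrKA.
Qed.

Lemma sigma_fixedMn a n : sigma_fixed a -> sigma_fixed (a *+ n).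
Proof. by move=> fixa x; rewrite raddfMn /= fixa. Qed.

Lemma sigma_fixed_sum (I : Type) (r : seq I) (P : pred I) (F : I -> B) :
  (forall i, P i -> sigma_fixed (F i)) -> sigma_fixed (\sum_(i <- r | P i) F i).
Proof.
by move=> fixF x; rewrite raddf_sum /=; apply: eq_bigr => i /(fixF i)->.
Qed.

Lemma sigma_fixed_double a :
  circ_central a -> circ_double_add a -> sigma_fixed (a *+ 2).
Proof.
move=> ca a2 x.
by rewrite raddfMn /= /Defs.sigma mulrnBl -ca a2 addrAC subrr add0r.
Qed.

Lemma circ_centralM a b :
  circ_central a -> circ_central b -> circ_central (circ Br a b).
Proof. by move=> ca cb x; rewrite -circA cb circA ca -circA. Qed.

Lemma circ_double_addM a b :
  circ_double_add a -> circ_double_add b -> circ_double_add (circ Br a b).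
Proof. by move=> a2 b2 x; rewrite -circA a2 b2 a2 -addrA. Qed.

Variable c : B.

Lemma cpow0 : cpow c 0 = cone Br.
Proof. by []. Qed.

Lemma cpowS k : cpow c k.+1 = circ Br c (cpow c k).
Proof. exact: iterS. Qed.

Lemma circ_central_cpow k : circ_central c -> circ_central (cpow c k).
Proof.
move=> cc; elim: k => [|k ck]; first by move=> x; rewrite cpow0 circ1l circ1r.
by rewrite cpowS; apply: circ_centralM.
Qed.

Lemma circ_double_add_cpow k : circ_double_add c -> circ_double_add (cpow c k).
Proof.
move=> c2; elim: k => [|k ck].
  by move=> x; rewrite cpow0 circ1l cone0 mul0rn addr0.
by rewrite cpowS; apply: circ_double_addM.
Qed.

Hypotheses (cc : circ_central c) (c2 : circ_double_add c).

Lemma sigma_fixed_double_cpow k : sigma_fixed (cpow c k *+ 2).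
Proof.
apply: sigma_fixed_double.
  exact: circ_central_cpow.
exact: circ_double_add_cpow.
Qed.

Lemma sigma_fixed_double_cpow_sum (F : nat -> nat) (i j : nat) :
  sigma_fixed ((\sum_(i <= l < j) cpow c (F l)) *+ 2).
Proof.
rewrite -sumrMnl; apply: sigma_fixed_sum => l _.
exact: sigma_fixed_double_cpow.
Qed.

End BraceEquivariance.

Theorem mainTheorem5 (B : zmodType) (Br : brace B) (c : B)
  (hc : forall b, circ Br c b = circ Br b c) :
  (forall n : int, equivariant Br (fun x => circ Br c x - c + x *~ n)) /\
  ((forall b, (circ Br c b) *+ 2 = b *+ 2 + c *+ 2) ->
     (forall n : int, equivariant Br (fun x => circ Br c x + c + x *~ n)) /\
     (forall m : nat, (1 <= m)%N -> equivariant Br (fun x =>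
        circ Br (cpow Br c (2 * m)) x + cpow Br c (2 * m)
        + (\sum_(1 <= j < m) cpow Br c (2 * j)) *+ 2
        - (\sum_(1 <= j < m.+1) cpow Br c (2 * j - 1)) *+ 2)) /\
     (forall m : nat, (1 <= m)%N -> equivariant Br (fun x =>
        circ Br (cpow Br c (2 * m)) x - cpow Br c (2 * m)
        - (\sum_(1 <= j < m) cpow Br c (2 * j)) *+ 2
        + (\sum_(1 <= j < m.+1) cpow Br c (2 * j - 1)) *+ 2)) /\
     (forall (m : nat) (n : int), (1 <= m)%N -> equivariant Br (fun x =>
        c *+ (2 * m) + x *~ ((2 * m)%:Z + n)))).
Proof.
split=> [n|c2].
  exact: equivariantD (equivariant_sigma_central hc) (equivariant_mulrz _ n).
have fix2c : sigma_fixed Br (c *+ 2) by apply: sigma_fixed_double.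
have fix2pow := sigma_fixed_double_cpow hc c2.
have fix2sum := sigma_fixed_double_cpow_sum hc c2.
have pow_central m := circ_central_cpow (2 * m) hc.
split=> [n|]; last split=> [m _|]; last split=> [m _|m n _].
- exact: equivariantD (equivariant_circ_addr hc fix2c) (equivariant_mulrz _ n).
- exact: equivariantB (equivariantD (equivariant_circ_addr (pow_central m)
    (fix2pow _)) (equivariant_cst (fix2sum _ _ _)))
    (equivariant_cst (fix2sum _ _ _)).
- exact: equivariantD (equivariantB (equivariant_sigma_central (pow_central m))
    (equivariant_cst (fix2sum _ _ _))) (equivariant_cst (fix2sum _ _ _)).
- rewrite mulrnA; exact: equivariantD (equivariant_cst (sigma_fixedMn _ fix2c))
    (equivariant_mulrz _ _).
Qed.
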